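(* Let $d\ge1$ and let $g=(\alpha_1,\dots,\alpha_d)\in(\mathbf{C}^* )^d$ with $\alpha_1,\dots,\alpha_d$ multiplicatively independent. Let $F\in\mathbf{C}[X_1^{\pm1},\dots,X_d^{\pm1}]$ be a Laurent polynomial such that the divisor $D=F^{-1}(0)\subset\mathbf{G}_m^d$ is irreducible and has finite stabilizer. Then the roots of the power sum $n\mapsto F(g^n)$ generate a subgroup of finite index in the multiplicative group generated by $\alpha_1,\dots,\alpha_d$.
   Context: A power sum is a function $n\mapsto \mathbf{f}(n)=\sum_{i=1}^k b_i\alpha_i^n$ with $k\ge1$, nonzero complex coefficients $b_i$ and pairwise distinct nonzero complex numbers $\alpha_i$; this representation is unique and the $\alpha_i$ are called the roots of $\mathbf{f}$. Here $g^n=(\alpha_1^n,\dots,\alpha_d^n)$. The stabilizer of $D\subset\mathbf{G}_m^d$ is $\{x\in\mathbf{G}_m^d: xD=D\}$. *)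

From HB Require Import structures.
From mathcomp Require Import all_boot all_order all_algebra.
From mathcomp Require Import classical_sets cardinality reals.
From mathcomp Require Import complex.
Set Implicit Arguments. Unset Strict Implicit. Unset Printing Implicit Defensive.
Import Order.TTheory GRing.Theory Num.Theory.
Local Open Scope ring_scope.
Local Open Scope classical_set_scope.

Section Defs.
Variable C : fieldType.
Variable d : nat.

Definition torus : set ('I_d -> C) := [set x | forall i, x i != 0].

(* A Laurent polynomial in X_1^{+-1},...,X_d^{+-1}, given as a finite list of
   terms (c, e) meaning c * X^e, with e : Z^d. *)
Definition laurent := seq (C * ('I_d -> int)).

Definition leval (F : laurent) (x : 'I_d -> C) : C :=
  \sum_(t <- F) t.1 * \prod_(i < d) x i ^ t.2 i.

Definition lzero (F : laurent) : set ('I_d -> C) :=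
  [set x | torus x /\ leval F x = 0].

Definition zclosed (A : set ('I_d -> C)) : Prop :=
  exists S : set laurent, A = [set x | torus x /\ forall G, S G -> leval G x = 0].

Definition zirreducible (Z : set ('I_d -> C)) : Prop :=
  Z !=set0 /\
  forall A B, zclosed A -> zclosed B -> Z `<=` A `|` B -> Z `<=` A \/ Z `<=` B.

Definition tmul (x y : 'I_d -> C) : 'I_d -> C := fun i => x i * y i.

Definition stabilizer (D : set ('I_d -> C)) : set ('I_d -> C) :=
  [set x | torus x /\ [set tmul x y | y in D] = D].

Definition gpow (g : 'I_d -> C) (n : nat) : 'I_d -> C := fun i => g i ^+ n.

Definition mult_indep (g : 'I_d -> C) : Prop :=
  forall k : 'I_d -> int, \prod_(i < d) g i ^ k i = 1 -> forall i, k i = 0.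

Definition gen_group (g : 'I_d -> C) : set C :=
  [set z | exists k : 'I_d -> int, z = \prod_(i < d) g i ^ k i].
End Defs.

Section PowerSum.
Variable C : fieldType.

Definition gen_group_seq (s : seq C) : set C :=
  [set z | exists k : 'I_(size s) -> int, z = \prod_(j < size s) s`_j ^ k j].

Definition power_sum_rep (f : nat -> C) (rep : seq (C * C)) : Prop :=
  [/\ (0 < size rep)%N,
      all (fun p => p.1 != 0) rep,
      all (fun p => p.2 != 0) rep,
      uniq (map snd rep) &
      forall n : nat, f n = \sum_(p <- rep) p.1 * p.2 ^+ n].

Definition finite_index (H G : set C) : Prop :=
  H `<=` G /\
  exists cs : seq C, all (fun c => c \in G) cs /\
    G `<=` [set z | exists2 c, c \in cs & exists2 h, H h & z = c * h].
End PowerSum.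

From HB Require Import structures.
From mathcomp Require Import all_boot all_order all_algebra.
From mathcomp Require Import boolp classical_sets cardinality reals.
From mathcomp Require Import complex.
Import Order.TTheory GRing.Theory Num.Theory.
Local Open Scope ring_scope.
Local Open Scope classical_set_scope.
Set Implicit Arguments. Unset Strict Implicit. Unset Printing Implicit Defensive.

(* Write F = sum_(e in S) c_e X^e with S its support.  Then F(g^n) is the power
   sum sum_e c_e (g^e)^n, whose roots g^e are pairwise distinct by
   multiplicative independence, and they generate the image under e |-> g^e of
   the lattice spanned by S, which contains the lattice spanned by the
   differences S - e0.  If these differences do not span Q^d, an integer vector
   v orthogonal to them makes F weighted homogeneous, so the torus points
   (2^(k v_i))_i, k in N, rescale F and all stabilize its zero set, contradicting
   finiteness of the stabilizer.  Otherwise the lattice of differences contains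
   N Z^d for some N > 0, hence has finite index in Z^d, and this finite index
   survives the surjection e |-> g^e onto <alpha_1, ..., alpha_d>. *)

Lemma sum_undup_partition (R : nmodType) (I J : eqType) (s : seq I)
    (k : I -> J) (F : I -> R) :
  \sum_(i <- s) F i = \sum_(j <- undup (map k s)) \sum_(i <- s | k i == j) F i.
Proof.
rewrite (exchange_big_dep xpredT) //=; apply: eq_big_seq => i i_s.
rewrite -big_filter.
have -> : [seq j <- undup (map k s) | k i == j] = [:: k i].
  rewrite -(filter_pred1_uniq (undup_uniq (map k s))) ?mem_undup ?map_f //.
  by apply: eq_filter => j; rewrite eq_sym.
by rewrite big_seq1.
Qed.

Section IntSpan.
Variable V : zmodType.
Implicit Types (E : seq V) (w : V).

Definition int_span E : set V :=
  [set w | exists k : 'I_(size E) -> int, w = \sum_(j < size E) E`_j *~ k j].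

Lemma int_span0 E : int_span E 0.
Proof. by exists (fun=> 0); rewrite big1 // => j _; rewrite mulr0z. Qed.

Lemma int_spanD E w w' : int_span E w -> int_span E w' -> int_span E (w + w').
Proof.
move=> [k ->] [k' ->]; exists (fun j => k j + k' j).
by rewrite -big_split; apply: eq_bigr => j _; rewrite mulrzDr.
Qed.

Lemma int_spanMz E w z : int_span E w -> int_span E (w *~ z).
Proof.
move=> [k ->]; exists (fun j => k j * z).
by rewrite mulrz_suml; apply: eq_bigr => j _; rewrite mulrzA.
Qed.

Lemma int_spanB E w w' : int_span E w -> int_span E w' -> int_span E (w - w').
Proof. by move=> Ew Ew'; rewrite -mulrN1z; apply/int_spanD/int_spanMz. Qed.

Lemma int_span_sum E (I : Type) (r : seq I) (P : pred I) (F : I -> V) :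
  (forall i, P i -> int_span E (F i)) -> int_span E (\sum_(i <- r | P i) F i).
Proof.
move=> EF; elim/big_rec: _ => [|i w Pi]; first exact: int_span0.
exact/int_spanD/EF.
Qed.

Lemma int_span_mem E w : w \in E -> int_span E w.
Proof.
move=> Ew; have jE : (index w E < size E)%N by rewrite index_mem.
exists (fun j => (j == Ordinal jE)%:Z); rewrite (bigD1 (Ordinal jE)) //= big1.
  by rewrite eqxx mulr1z nth_index // addr0.
by move=> j /negbTE ->; rewrite mulr0z.
Qed.

Lemma int_span_subset D E :
  (forall w, w \in D -> int_span E w) -> int_span D `<=` int_span E.
Proof.
move=> DE _ [k ->]; apply: int_span_sum => j _; apply/int_spanMz/DE.
exact: mem_nth.
Qed.

End IntSpan.

Lemma map_mx_intr_inj m n :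
  injective (map_mx (intr : int -> rat) : 'M_(m, n) -> 'M_(m, n)).
Proof.
move=> A B /matrixP AB; apply/matrixP => i j.
by apply: (@intr_inj rat); move: (AB i j); rewrite !mxE.
Qed.

Lemma denominator_mx m n (B : 'M[rat]_(m, n)) :
  exists2 N : nat, (0 < N)%N &
    exists Z : 'M[int]_(m, n), map_mx intr Z = N%:R *: B.
Proof.
pose den (p : 'I_m * 'I_n) := denq (B p.1 p.2).
have [N denN] : exists N : nat, \prod_p den p = N%:Z.
  exists `|(\prod_p den p)%R|%N; rewrite gez0_abs // prodr_ge0 // => p _.
  exact/ltW/denq_gt0.
exists N.
  by rewrite -ltz_nat -denN prodr_gt0 // => p _; apply: denq_gt0.
exists (\matrix_(i, j) (numq (B i j) * \prod_(p | p != (i, j)) den p)).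
apply/matrixP => i j; rewrite !mxE -[N%:R]/((N%:Z)%:~R) -denN.
by rewrite [\prod_p _](bigD1 (i, j)) //= !intrM numqE [RHS]mulrC -mulrA.
Qed.

Section IntegerDichotomy.
Variable d : nat.

Lemma int_span_full_or_orthogonal (D : seq 'rV[int]_d) :
  (exists2 v : 'rV[int]_d, v != 0 & forall w, w \in D -> w *m v^T = 0)
  \/ (exists2 N : nat, (0 < N)%N & forall w, int_span D (w *+ N)).
Proof.
pose M : 'M[int]_(size D, d) := \matrix_(j < size D) D`_j.
pose A := map_mx intr M : 'M[rat]_(size D, d).
have [/row_fullP[B AB] | A_nfull] := boolP (row_full A).
  right; have [N N_gt0 [Z ZB]] := denominator_mx B.
  have ZM : Z *m M = N%:R%:M.
    apply: map_mx_intr_inj.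
    by rewrite map_mxM ZB -scalemxAl AB map_scalar_mx rmorph_nat scalemx1.
  exists N => // w; exists (fun j => (w *m Z) 0 j).
  rewrite -scaler_nat -mul_mx_scalar -ZM mulmxA mulmx_sum_row.
  by apply: eq_bigr => j _; rewrite rowK -scaler_int intz.
left; have K_neq0 : kermx A^T != 0.
  rewrite -mxrank_eq0 mxrank_ker mxrank_tr -lt0n subn_gt0.
  by rewrite ltn_neqAle rank_leq_col andbT.
have [u /sub_kermxP uA u_neq0] := rowV0Pn K_neq0.
have [N N_gt0 [v vu]] := denominator_mx u.
exists v => [|w wD].
  apply: contraNneq u_neq0 => v0; move/eqP: vu; rewrite v0 map_mx0 eq_sym.
  by rewrite scaler_eq0 pnatr_eq0 gtn_eqF.
have Mv : M *m v^T = 0.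
  apply: map_mx_intr_inj; rewrite map_mxM -map_trmx vu map_mx0 linearZ /=.
  by rewrite -scalemxAr -/A -[A]trmxK -trmx_mul uA trmx0 scaler0.
have jD : (index w D < size D)%N by rewrite index_mem.
have -> : w = row (Ordinal jD) M by rewrite rowK nth_index.
by rewrite -row_mul Mv row0.
Qed.

End IntegerDichotomy.

Section Monomials.
Variables (C : fieldType) (d : nat).
Implicit Types (x y : 'I_d -> C) (e f : 'rV[int]_d).

Definition monomial x e : C := \prod_(i < d) x i ^ e 0 i.

Lemma monomial0 x : monomial x 0 = 1.
Proof. by rewrite /monomial big1 // => i _; rewrite mxE expr0z. Qed.

Lemma monomialD x : torus x -> {morph monomial x : e f / e + f >-> e * f}.
Proof.
move=> tx e f; rewrite /monomial -big_split; apply: eq_bigr => i _.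
by rewrite mxE expfzDr.
Qed.

Lemma monomial_sum x (I : Type) (r : seq I) (P : pred I) (F : I -> 'rV[int]_d) :
  torus x ->
  monomial x (\sum_(i <- r | P i) F i) = \prod_(i <- r | P i) monomial x (F i).
Proof.
by move=> tx; apply: (big_morph (monomial x) (monomialD tx) (monomial0 x)).
Qed.

Lemma monomialMz x e k : monomial x (e *~ k) = monomial x e ^ k.
Proof.
rewrite /monomial.
rewrite (big_morph (fun c => c ^ k) (fun a b => expfzMl a b k) (exp1rz _ k)).
by apply: eq_bigr => i _; rewrite -scaler_int mxE intz [k * _]mulrC exprz_exp.
Qed.

Lemma monomial_neq0 x e : torus x -> monomial x e != 0.
Proof. by move=> tx; apply/prodf_neq0 => i _; rewrite expfz_neq0. Qed.

Lemma monomial_tmul x y e : monomial (tmul x y) e = monomial x e * monomial y e.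
Proof.
by rewrite /monomial -big_split; apply: eq_bigr => i _; rewrite expfzMl.
Qed.

Lemma monomial_gpow x e n : monomial (gpow x n) e = monomial x e ^+ n.
Proof.
rewrite /monomial -prodrXl; apply: eq_bigr => i _.
by rewrite /gpow !exprnP exprzAC.
Qed.

Lemma monomial_inj x : torus x -> mult_indep x -> injective (monomial x).
Proof.
move=> tx indep e f efx; apply/eqP; rewrite -subr_eq0; apply/eqP/rowP => i.
have : monomial x (e - f) = 1.
  by apply: (mulIf (monomial_neq0 f tx)); rewrite -monomialD // subrK efx mul1r.
by move/indep => /(_ i); rewrite !mxE.
Qed.

Lemma gen_groupE x : gen_group x = range (monomial x).
Proof.
apply/seteqP; split => [_ [k ->] | _ [e _ <-]]; last by exists (fun i => e 0 i).
by exists (\row_i k i) => //; apply: eq_bigr => i _; rewrite mxE.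
Qed.

Lemma gen_group_seq_monomial x E : torus x ->
  gen_group_seq (map (monomial x) E) = monomial x @` int_span E.
Proof.
move=> tx; rewrite /gen_group_seq size_map.
have prod_monomialE k : \prod_(j < size E) (map (monomial x) E)`_j ^ k j =
    monomial x (\sum_(j < size E) E`_j *~ k j).
  rewrite monomial_sum //; apply: eq_bigr => j _.
  by rewrite monomialMz (nth_map 0).
apply/seteqP; split => [_ [k ->] | _ [_ [k ->] <-]]; last by exists k.
by rewrite prod_monomialE; exists (\sum_(j < size E) E`_j *~ k j); first exists k.
Qed.

End Monomials.

Lemma finite_index_monomial (C : fieldType) d (x : 'I_d -> C)
    (L : set 'rV[int]_d) N :
  torus x -> (0 < N)%N -> (forall w, L (w *+ N)) ->
  finite_index (monomial x @` L) (range (monomial x)).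
Proof.
move=> tx N_gt0 LN; split=> [_ [w _ <-] | ]; first by exists w.
pose rep (f : {ffun 'I_d -> 'I_N}) : 'rV[int]_d := \row_i (f i : nat)%:Z.
exists [seq monomial x (rep f) | f : {ffun 'I_d -> 'I_N}]; split.
  by apply/allP => _ /mapP[f _ ->]; rewrite inE; exists (rep f).
move=> _ [k _ <-].
have N_neq0 : N%:Z != 0 by rewrite eqz_nat -lt0n.
have mod_lt i : (`|modz (k 0%R i) N| < N)%N.
  by rewrite -ltz_nat gez0_abs ?modz_ge0 // ltz_pmod.
pose q : 'rV[int]_d := \row_i divz (k 0 i) N.
exists (monomial x (rep [ffun i => Ordinal (mod_lt i)])).
  by apply: map_f; rewrite mem_enum.
exists (monomial x (q *+ N)); first by exists (q *+ N).
rewrite -monomialD //; congr monomial; apply/rowP => i.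
rewrite -scaler_nat !mxE ffunE /= gez0_abs ?modz_ge0 //.
by rewrite addrC mulrC -natz -divz_eq.
Qed.

Section Support.
Variables (C : fieldType) (d : nat).
Implicit Types (F : laurent C d) (x : 'I_d -> C) (e : 'rV[int]_d).

Definition exponent (t : C * ('I_d -> int)) : 'rV[int]_d := \row_i t.2 i.

Definition lcoef F e : C := \sum_(t <- F | exponent t == e) t.1.

Definition lsupport F : seq 'rV[int]_d :=
  [seq e <- undup (map exponent F) | lcoef F e != 0].

Lemma lsupport_uniq F : uniq (lsupport F).
Proof. by rewrite filter_uniq ?undup_uniq. Qed.

Lemma lcoef_lsupport F e : e \in lsupport F -> lcoef F e != 0.
Proof. by rewrite mem_filter => /andP[]. Qed.

Lemma leval_lsupport F x :
  leval F x = \sum_(e <- lsupport F) lcoef F e * monomial x e.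
Proof.
rewrite /leval (sum_undup_partition _ exponent) big_filter [RHS]big_mkcond.
apply: eq_bigr => e _.
have -> : \sum_(t <- F | exponent t == e) t.1 * \prod_(i < d) x i ^ t.2 i =
    lcoef F e * monomial x e.
  rewrite /lcoef big_distrl; apply: eq_bigr => t /eqP <-.
  by congr (_ * _); apply: eq_bigr => i _; rewrite mxE.
by have [->|] := eqVneq (lcoef F e) 0; rewrite ?mul0r.
Qed.

Lemma power_sum_rep_lsupport F x :
  torus x -> mult_indep x -> lsupport F != [::] ->
  power_sum_rep (fun n => leval F (gpow x n))
    [seq (lcoef F e, monomial x e) | e <- lsupport F].
Proof.
move=> tx indep suppF; split.
- by rewrite size_map lt0n size_eq0.
- by apply/allP => _ /mapP[e eF ->]; apply: lcoef_lsupport.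
- by apply/allP => _ /mapP[e _ ->]; apply: monomial_neq0.
- by rewrite -map_comp (map_inj_uniq (monomial_inj tx indep)) lsupport_uniq.
- move=> n; rewrite leval_lsupport big_map.
  by apply: eq_bigr => e _; rewrite monomial_gpow.
Qed.

End Support.

Lemma infinite_set_inj (T : Type) (S : set T) (f : nat -> T) :
  injective f -> range f `<=` S -> infinite_set S.
Proof.
move=> f_inj fS /(sub_finite_set fS).
move/(finite_preimage (fun m n _ _ => f_inj m n)).
suff -> : f @^-1` range f = setT by apply: infinite_nat.
by apply/seteqP; split => // n _; exists n.
Qed.

Section Stabilizer.
Variables (C : fieldType) (d : nat).
Implicit Types (F : laurent C d) (t x : 'I_d -> C).

Lemma torus_tmul x y : torus x -> torus y -> torus (tmul x y).
Proof. by move=> tx ty i; rewrite mulf_neq0. Qed.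

Lemma stabilizer_lzero_scale F t lam : torus t -> lam != 0 ->
  (forall x, torus x -> leval F (tmul t x) = lam * leval F x) ->
  stabilizer (lzero F) t.
Proof.
move=> tt lam_neq0 Ft; split=> //.
pose t' i := (t i)^-1; have tt' : torus t' by move=> i; rewrite invr_eq0.
have tt'x x : tmul t (tmul t' x) = x.
  by apply: funext => i; rewrite /tmul mulrA mulfV ?mul1r.
apply/seteqP; split => [_ [y [ty Fy] <-] | x [tx Fx]].
  by split; [apply: torus_tmul | rewrite Ft // Fy mulr0].
have tt'x_torus : torus (tmul t' x) by apply: torus_tmul.
exists (tmul t' x) => //; split => //.
have := Ft _ tt'x_torus; rewrite tt'x Fx => /esym/eqP.
by rewrite mulf_eq0 (negbTE lam_neq0) => /eqP.
Qed.

End Stabilizer.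

Lemma rV_neq0P (R : zmodType) n (v : 'rV[R]_n) : v != 0 -> exists i, v 0 i != 0.
Proof.
move=> v_neq0; apply/existsP; apply: contraNT v_neq0 => /existsPn v0.
by apply/eqP/rowP => i; rewrite mxE; move/negPn/eqP: (v0 i).
Qed.

Lemma prod_exprz (R : fieldType) (I : Type) (r : seq I) (P : pred I) (a : R)
    (F : I -> int) :
  a != 0 -> \prod_(i <- r | P i) a ^ F i = a ^ (\sum_(i <- r | P i) F i).
Proof.
move=> a_neq0.
by rewrite (big_morph _ (fun m n => expfzDr m n a_neq0) (expr0z a)).
Qed.

Lemma exprz2_inj (C : numFieldType) : injective (exprz (2 : C)).
Proof.
move=> a b; rewrite -(ratr_nat C 2) -!rmorphXz ?unitfE // => /fmorph_inj.
exact: ieexprIz.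
Qed.

Section InfiniteStabilizer.
Variables (C : numFieldType) (d : nat).

Lemma stabilizer_infinite_homogeneous (F : laurent C d) (v : 'rV[int]_d)
    (c : 'M[int]_1) :
  v != 0 -> (forall e, e \in lsupport F -> e *m v^T = c) ->
  infinite_set (stabilizer (lzero F)).
Proof.
move=> /rV_neq0P[i0 vi0] Fv.
have two_neq0 : (2 : C) != 0 by rewrite pnatr_eq0.
(* [t k] multiplies every monomial of [v]-weight [c] by [2 ^ (k c)]. *)
pose t (k : nat) i : C := 2 ^ (k%:Z * v 0 i).
have t_torus k : torus (t k) by move=> i; rewrite expfz_neq0.
have monomial_t k e : monomial (t k) e = 2 ^ (k%:Z * (e *m v^T) 0 0).
  rewrite /monomial mxE mulr_sumr -prod_exprz //; apply: eq_bigr => i _.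
  by rewrite exprz_exp mxE [e 0 i * _]mulrC mulrA.
apply: (@infinite_set_inj _ _ t) => [k k' /(congr1 (fun x => x i0))|_ [k _ <-]].
  by move/exprz2_inj/(mulIf vi0) => -[].
apply: (stabilizer_lzero_scale (t_torus k) (expfz_neq0 (k%:Z * c 0 0) two_neq0)).
move=> x tx; rewrite !leval_lsupport mulr_sumr; apply: eq_big_seq => e eF.
by rewrite monomial_tmul monomial_t Fv // mulrCA.
Qed.

End InfiniteStabilizer.

Theorem lemma5p2 (R : realType) (d : nat) (g : 'I_d -> R[i]) (F : laurent R[i] d) :
  (0 < d)%N ->
  (forall i, g i != 0) ->
  mult_indep g ->
  zirreducible (lzero F) ->
  finite_set (stabilizer (lzero F)) ->
  exists rep : seq (R[i] * R[i]),
    power_sum_rep (fun n => leval F (gpow g n)) rep /\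
    finite_index (gen_group_seq (map snd rep)) (gen_group g).
Proof.
move=> d_gt0 tg g_indep _ stab_fin.
set E := lsupport F.
have [E_nil | E_neq_nil] := eqVneq E [::].
  (* [F] vanishes identically, so it is homogeneous for every weight. *)
  have one_neq0 : const_mx 1 != 0 :> 'rV[int]_d.
    by apply/eqP => /rowP/(_ (Ordinal d_gt0)); rewrite !mxE.
  exfalso; apply: (stabilizer_infinite_homogeneous (c := 0) one_neq0 _ stab_fin).
  by move=> e; rewrite -/E E_nil.
have E0 : E`_0 \in E by rewrite mem_nth // lt0n size_eq0.
have [[v v_neq0 Dv] | [N N_gt0 DN]] :=
  int_span_full_or_orthogonal [seq e - E`_0 | e <- E].
  exfalso; apply: (stabilizer_infinite_homogeneous (c := E`_0 *m v^T) v_neq0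
    _ stab_fin) => e eE.
  by apply/eqP; rewrite -subr_eq0 -mulmxBl Dv //; apply: map_f.
exists [seq (lcoef F e, monomial g e) | e <- E].
split; first exact: power_sum_rep_lsupport.
rewrite -map_comp gen_group_seq_monomial // gen_groupE.
apply: (finite_index_monomial tg N_gt0) => w.
apply: int_span_subset (DN w) => _ /mapP[e eE ->].
by apply: int_spanB; apply: int_span_mem.
Qed.
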